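(* For each $0\le k\le K$ define $$v_k^-=\inf\Big(\operatorname*{argmax}_{v\in[0,q]}\Psi_k^{\mathrm{BSAA}}(v)\Big),\qquad v_k^+=\inf\Big(\operatorname*{argmax}_{v\in[q,1]}\Psi_k^{\mathrm{BSAA}}(v)\Big).$$ Then the sequences $(v_k^-)_{k=0}^K$ and $(v_k^+)_{k=0}^K$ are non-increasing in $k$.
   Context: Fix $c_u,c_o>0$ and $q=c_u/(c_u+c_o)\in(0,1)$. Fix $K\ge1$, $\bm n=(n_1,\dots,n_K)\in\mathbb N^K$, $n=\sum_k n_k$, $\sigma_k=\sum_{\ell=1}^k n_\ell$ ($\sigma_0=0$). $B_{r,m}(p)=\sum_{j=r}^m\binom mj p^j(1-p)^{m-j}$ (with $B_{r,m}\equiv1$ if $r<0$). For $v\in[0,1]$, $\Psi_k^{\mathrm{BSAA}}(v)=\big(1-B_{\lceil qn\rceil-\sigma_k,\,n-\sigma_k}(v)\big)(v-q)+(q-v)^+$. *)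

From HB Require Import structures.
From mathcomp Require Import all_boot all_order all_algebra.
From mathcomp Require Import all_classical all_reals.
Set Implicit Arguments. Unset Strict Implicit. Unset Printing Implicit Defensive.
Import Order.TTheory GRing.Theory Num.Theory.
Local Open Scope ring_scope.
Local Open Scope classical_set_scope.

Definition Btail {R : realType} (r : int) (m : nat) (p : R) : R :=
  if (r < 0)%R then 1
  else \sum_(`|r|%N <= j < m.+1) ('C(m, j))%:R * p ^+ j * (1 - p) ^+ (m - j).

Definition qratio {R : realType} (cu co : R) : R := cu / (cu + co).

(* sigma_k = n_1 + ... + n_k  (sigma_0 = 0); batch sizes ns 1, ..., ns K *)
Definition sigma (ns : nat -> nat) (k : nat) : nat := (\sum_(1 <= l < k.+1) ns l)%N.

Definition PsiBSAA {R : realType} (cu co : R) (K : nat) (ns : nat -> nat) (k : nat) (v : R) : R :=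
  let q := qratio cu co in
  let n := sigma ns K in
  (1 - Btail (Num.ceil (q * n%:R) - (sigma ns k)%:Z) (n - sigma ns k) v) * (v - q)
  + Num.max (q - v) 0.

Definition argmax_on {R : realType} (f : R -> R) (A : set R) : set R :=
  [set v | A v /\ forall w, A w -> f w <= f v].

Definition vminus {R : realType} (cu co : R) K ns k : R :=
  inf (argmax_on (PsiBSAA cu co K ns k) `[0, qratio cu co]).
Definition vplus {R : realType} (cu co : R) K ns k : R :=
  inf (argmax_on (PsiBSAA cu co K ns k) `[qratio cu co, 1]).

From mathcomp Require Import all_boot all_order all_algebra.
From mathcomp Require Import all_classical all_reals all_analysis.
From mathcomp Require Import ring lra zify.
(* On [0, q] the objective is [B_{r,m}(v) (q - v)] and on [q, 1] it is
   [(1 - B_{r,m}(v)) (v - q)], where [m = n - sigma_k] observations remain and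
   [m - r] does not depend on [k].  Going from [k] to [k + 1] removes
   observations one at a time, each step replacing [(r + 1, m + 1)] by
   [(r, m)].  By Pascal's rule and the monotone likelihood ratio of the
   binomial family, the ratio of the new tail factor to the old one is
   nonincreasing in [v], so whenever the old objective decreases from [x] to
   [y >= x] so does the new one.  Hence nothing to the right of a maximiser of
   the old objective beats it for the new one: the leftmost maximiser moves
   left. *)

Set Implicit Arguments.
Unset Strict Implicit.
Unset Printing Implicit Defensive.

Import Order.TTheory GRing.Theory Num.Theory.
Import numFieldNormedType.Exports.
Local Open Scope ring_scope.

Section DescentTransfer.
Variable R : realType.
Implicit Types (f g h : R -> R) (a b : R).

Definition descent_transfer f g a b :=
  forall x y, a <= x -> x <= y -> y <= b -> f y <= f x -> g y <= g x.

Lemma descent_transfer_trans f g h a b :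
  descent_transfer f g a b -> descent_transfer g h a b -> descent_transfer f h a b.
Proof. by move=> fg gh x y ax xy yb fyx; apply: gh => //; apply: fg. Qed.

Lemma descent_transfer_chain (f : nat -> R -> R) a b :
  (forall m, descent_transfer (f m.+1) (f m) a b) ->
  forall m s, descent_transfer (f (m + s)%N) (f m) a b.
Proof.
move=> step m; elim=> [|s IH]; first by rewrite addn0 => x y _ _ _.
by rewrite addnS; apply: descent_transfer_trans (step _) IH.
Qed.

Lemma eq_descent_transfer f f' g g' a b :
  {in `[a, b], f =1 f'} -> {in `[a, b], g =1 g'} ->
  descent_transfer f' g' a b -> descent_transfer f g a b.
Proof.
move=> ef eg fg' x y ax xy yb.
have xI : x \in `[a, b] by rewrite in_itv /= ax (le_trans xy yb).
have yI : y \in `[a, b] by rewrite in_itv /= yb (le_trans ax xy).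
by rewrite !ef // !eg //; apply: fg'.
Qed.

(* For any maximiser [x] of [f], a maximiser of [h] on [a, x] is global:
   points [w > x] have [f w <= f x], hence [h w <= h x]. *)
Lemma inf_argmax_le f h a b : a <= b -> continuous f -> continuous h ->
  descent_transfer f h a b ->
  inf (argmax_on h `[a, b]%classic) <= inf (argmax_on f `[a, b]%classic).
Proof.
move=> ab cf ch fh.
have [c cI cmax] := EVT_max ab (continuous_subspaceT cf).
apply: lb_le_inf; first by exists c.
move=> x [/= xI xmax]; move: (xI); rewrite in_itv /= => /andP[ax xb].
have [z zI zmax] := EVT_max ax (continuous_subspaceT ch).
move: (zI); rewrite in_itv /= => /andP[az zx].
have hlb : has_lbound (argmax_on h `[a, b]%classic).
  by exists a => w [/=]; rewrite in_itv /= => /andP[].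
apply: (le_trans _ zx); apply: (ge_inf hlb); split.
  by rewrite /= in_itv /= az (le_trans zx xb).
move=> w /=; rewrite in_itv /= => /andP[aw wb].
have [wx|xw] := leP w x; first by apply: zmax; rewrite in_itv /= aw.
apply: (le_trans (y := h x)); last by apply: zmax; rewrite in_itv /= ax /=.
by apply: fh => //; [exact: ltW | apply: xmax; rewrite /= in_itv /= aw].
Qed.

(* [G / F] nonincreasing, in cross-multiplied form; the hypotheses on [F a]
   handle [F] vanishing at the left end. *)
Lemma descent_transfer_scaled (F G w : R -> R) a b :
  (forall v, a <= v <= b -> 0 <= G v /\ 0 <= w v) ->
  0 <= F a -> (forall v, a < v < b -> 0 < F v) -> (F a = 0 -> w b = 0) ->
  (forall x y, a <= x -> x <= y -> y <= b -> G y * F x <= G x * F y) ->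
  descent_transfer (fun v => F v * w v) (fun v => G v * w v) a b.
Proof.
move=> Gw0 Fa0 Fpos Fab cross x y ax xy yb /= fyx.
have [Gx0 wx0] : 0 <= G x /\ 0 <= w x by apply: Gw0; rewrite ax (le_trans xy yb).
have [Gy0 wy0] : 0 <= G y /\ 0 <= w y by apply: Gw0; rewrite yb (le_trans ax xy).
have [-> //|nxy] := eqVneq x y.
have xb : x < b by apply: lt_le_trans yb; rewrite lt_neqAle nxy.
have [Fx0|/andP[xa /eqP Fa]] : 0 < F x \/ (x == a) && (F a == 0).
  move: (ax); rewrite le_eqVlt => /orP[/eqP xa|ax']; last by left; apply: Fpos; rewrite ax'.
  by rewrite -xa eqxx /=; move: Fa0; rewrite le_eqVlt eq_sym => /orP[]; [right|left].
- have := ler_wpM2r wy0 (cross x y ax xy yb).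
  have := ler_wpM2l Gx0 fyx.
  rewrite -(ler_pM2r Fx0); nra.
have ay : a < y by rewrite -(eqP xa) lt_neqAle nxy.
have wy : w y = 0.
  move: fyx; rewrite (eqP xa) Fa mul0r => Fwy.
  have [yb'|byy] := ltP y b; last by rewrite (_ : y = b) ?Fab //; apply/le_anti; rewrite yb.
  have Fy : 0 < F y by apply: Fpos; rewrite ay yb'.
  by apply/eqP; rewrite eq_le wy0 andbT; nra.
by rewrite wy mulr0; apply: mulr_ge0.
Qed.

End DescentTransfer.

Section BinomialTails.
Variable R : realType.
Implicit Types x y v : R.

Definition binpmf m j v : R := 'C(m, j)%:R * v ^+ j * (1 - v) ^+ (m - j).
Definition upper_tail r m v : R := \sum_(r <= j < m.+1) binpmf m j v.
Definition lower_tail r m v : R := \sum_(0 <= j < r) binpmf m j v.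

Lemma binpmf_ge0 m j v : 0 <= v <= 1 -> 0 <= binpmf m j v.
Proof.
move=> /andP[v0 v1]; rewrite /binpmf.
by rewrite !mulr_ge0 ?exprn_ge0 ?subr_ge0.
Qed.

Lemma binpmf_gt0 m j v : 0 < v < 1 -> (j <= m)%N -> 0 < binpmf m j v.
Proof.
move=> /andP[v0 v1] jm; rewrite /binpmf.
by rewrite !mulr_gt0 ?exprn_gt0 ?subr_gt0 ?ltr0n ?bin_gt0.
Qed.

Lemma upper_tail_ge0 r m v : 0 <= v <= 1 -> 0 <= upper_tail r m v.
Proof. by move=> v01; apply: sumr_ge0 => j _; apply: binpmf_ge0. Qed.

Lemma lower_tail_ge0 r m v : 0 <= v <= 1 -> 0 <= lower_tail r m v.
Proof. by move=> v01; apply: sumr_ge0 => j _; apply: binpmf_ge0. Qed.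

Lemma upper_tail_split r m v : (r <= m)%N ->
  upper_tail r m v = binpmf m r v + upper_tail r.+1 m v.
Proof. by move=> rm; rewrite /upper_tail big_ltn. Qed.

Lemma lower_tailS r m v : lower_tail r.+1 m v = lower_tail r m v + binpmf m r v.
Proof. by rewrite /lower_tail big_nat_recr. Qed.

Lemma upper_tail_gt0 r m v : 0 < v < 1 -> (r <= m)%N -> 0 < upper_tail r m v.
Proof.
move=> v01 rm; rewrite upper_tail_split //.
have /andP[v0 v1] := v01.
by rewrite ltr_wpDr ?upper_tail_ge0 ?binpmf_gt0 ?ltW ?v0 ?v1.
Qed.

Lemma lower_tail_gt0 r m v : 0 < v < 1 -> (0 < r)%N -> 0 < lower_tail r m v.
Proof.
case: r => // r v01 _; rewrite /lower_tail big_nat_recl //.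
have /andP[v0 v1] := v01.
by rewrite ltr_wpDr ?sumr_ge0 ?binpmf_gt0 // => j _; rewrite binpmf_ge0 ?ltW ?v0 ?v1.
Qed.

Lemma upper_tail0 m v : upper_tail 0 m v = 1.
Proof.
have := exprDn (1 - v) v m; rewrite subrK expr1n => ->.
rewrite /upper_tail big_mkord; apply: eq_bigr => j _.
by rewrite /binpmf -mulr_natl; ring.
Qed.

Lemma lower_tailE r m v : (r <= m.+1)%N -> lower_tail r m v = 1 - upper_tail r m v.
Proof.
by move=> rm; rewrite -(upper_tail0 m v) /upper_tail (@big_cat_nat _ _ _ r) //= addrK.
Qed.

Lemma binpmfSS m j v :
  binpmf m.+1 j.+1 v = (1 - v) * binpmf m j.+1 v + v * binpmf m j v.
Proof.
rewrite /binpmf binS natrD subSS.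
have [jm|mj] := ltnP j m; last by rewrite (bin_small (_ : m < j.+1)%N) ?ltnS // exprS; ring.
have -> : (m - j = (m - j.+1).+1)%N by lia.
by rewrite !exprS; ring.
Qed.

Lemma upper_tailSS r m v : (r <= m)%N ->
  upper_tail r.+1 m.+1 v = (1 - v) * upper_tail r.+1 m v + v * upper_tail r m v.
Proof.
move=> rm; rewrite {1}/upper_tail big_add1 /=.
rewrite (eq_bigr _ (fun j _ => binpmfSS m j v)) big_split /= -!mulr_sumr.
congr (_ * _ + _); rewrite /upper_tail big_add1 /= big_nat_recr //=.
by rewrite /binpmf bin_small // !mul0r addr0.
Qed.

Lemma lower_tailSS r m v : (r <= m)%N ->
  lower_tail r.+1 m.+1 v = (1 - v) * lower_tail r.+1 m v + v * lower_tail r m v.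
Proof.
move=> rm; rewrite !lower_tailE ?ltnS ?(leqW rm) // (upper_tailSS v rm); ring.
Qed.

(* Monotone likelihood ratio of the binomial family, sharpened by the factor
   [(1 - x) / (1 - y)]: after cancelling the common factor both sides reduce
   to [x^(d+1) (1-y)^d <= y^(d+1) (1-x)^d] with [d + 1 = l - j]. *)
Lemma binpmf_cross m j l x y : (j < l)%N -> (l <= m)%N ->
  0 <= x -> x <= y -> y <= 1 ->
  (1 - x) * binpmf m l x * binpmf m j y <= (1 - y) * binpmf m j x * binpmf m l y.
Proof.
move=> jl lm x0 xy y1.
have [d dl] : exists d, l = (j + d.+1)%N by exists (l - j.+1)%N; lia.
have [k km] : exists k, m = (l + k)%N by exists (m - l)%N; lia.
subst l m.
rewrite /binpmf addKn -addnA addKn.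
set cl := 'C(_, j + d.+1)%:R; set cj := 'C(_, j)%:R.
set c := cl * cj * x ^+ j * y ^+ j * (1 - x) ^+ k.+1 * (1 - y) ^+ k.+1.
have c0 : 0 <= c.
  by rewrite !mulr_ge0 ?ler0n ?exprn_ge0 ?subr_ge0 // (le_trans x0 xy, le_trans xy y1).
rewrite [leLHS](_ : _ = c * (x ^+ d.+1 * (1 - y) ^+ d)); last by rewrite /c !exprD !exprS; ring.
rewrite [leRHS](_ : _ = c * (y ^+ d.+1 * (1 - x) ^+ d)); last by rewrite /c !exprD !exprS; ring.
apply: ler_wpM2l => //; apply: ler_pM; rewrite ?exprn_ge0 ?subr_ge0 ?(le_trans xy y1) //.
  by apply: lerXn2r; rewrite ?nnegrE // (le_trans x0 xy).
by apply: lerXn2r; rewrite ?nnegrE ?subr_ge0 ?lerB ?(le_trans x0 xy, le_trans xy y1).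
Qed.

Lemma upper_tail_cross r m x y : 0 <= x -> x <= y -> y <= 1 ->
  (1 - y) * upper_tail r.+1 m x * binpmf m r y <= (1 - x) * upper_tail r.+1 m y * binpmf m r x.
Proof.
move=> x0 xy y1; rewrite /upper_tail !mulr_sumr !mulr_suml.
apply: ler_sum_nat => l /andP[rl lm].
have x01 : 0 <= x <= 1 by rewrite x0 (le_trans xy y1).
have y01 : 0 <= y <= 1 by rewrite y1 (le_trans x0 xy).
have := binpmf_cross rl lm x0 xy y1.
have := mulr_ge0 (binpmf_ge0 m l x01) (binpmf_ge0 m r y01).
have := mulr_ge0 (binpmf_ge0 m r x01) (binpmf_ge0 m l y01).
nra.
Qed.

Lemma lower_tail_cross r m x y : (r <= m)%N -> 0 <= x -> x <= y -> y <= 1 ->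
  (1 - x) * lower_tail r m y * binpmf m r x <= (1 - y) * lower_tail r m x * binpmf m r y.
Proof.
move=> rm x0 xy y1; rewrite /lower_tail !mulr_sumr !mulr_suml.
apply: ler_sum_nat => j /andP[_ jr].
by rewrite [leLHS]mulrAC; apply: binpmf_cross.
Qed.

Lemma continuous_upper_tail r m : continuous (upper_tail r m).
Proof.
have -> : upper_tail r m =
    horner (\sum_(r <= j < m.+1) 'C(m, j)%:R%:P * 'X^j * (1 - 'X) ^+ (m - j)).
  by apply/funext => v; rewrite horner_sum; apply: eq_bigr => j _; rewrite !hornerE.
exact: continuous_horner.
Qed.

Lemma Btail_subn r s m v : Btail (r%:Z - s%:Z) m v = upper_tail (r - s) m v.
Proof.
rewrite /Btail subr_lt0 ltz_nat; have [rs|sr] := ltnP r s; last by rewrite subzn.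
by rewrite (_ : r - s = 0)%N ?upper_tail0 //; apply/eqP; rewrite subn_eq0 ltnW.
Qed.

End BinomialTails.

Section TailDescent.
Variables (R : realType) (q : R).
Hypothesis q01 : 0 < q < 1.

Lemma upper_tail_descent r m : (r <= m)%N ->
  descent_transfer (fun v => upper_tail r.+1 m.+1 v * (q - v))
                   (fun v => upper_tail r m v * (q - v)) 0 q.
Proof.
move=> rm; have /andP[q0 q1] := q01.
apply: descent_transfer_scaled.
- move=> v /andP[v0 vq]; rewrite subr_ge0 vq upper_tail_ge0 //.
  by rewrite v0 (le_trans vq (ltW q1)).
- by rewrite upper_tail_ge0 // lexx ler01.
- by move=> v /andP[v0 vq]; apply: upper_tail_gt0; rewrite ?v0 ?(lt_trans vq q1).
- by rewrite subrr.
move=> x y x0 xy yq.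
have y1 : y <= 1 by rewrite (le_trans yq (ltW q1)).
rewrite !(upper_tailSS _ rm) !(upper_tail_split _ rm).
have x01 : 0 <= x <= 1 by rewrite x0 (le_trans xy y1).
have y01 : 0 <= y <= 1 by rewrite y1 (le_trans x0 xy).
have := upper_tail_cross r m x0 xy y1.
have := mulr_ge0 (binpmf_ge0 m r x01) (binpmf_ge0 m r y01).
nra.
Qed.

Lemma lower_tail_descent r m : (r <= m)%N ->
  descent_transfer (fun v => lower_tail r.+1 m.+1 v * (v - q))
                   (fun v => lower_tail r m v * (v - q)) q 1.
Proof.
move=> rm; have /andP[q0 q1] := q01.
apply: descent_transfer_scaled.
- move=> v /andP[qv v1]; rewrite subr_ge0 qv lower_tail_ge0 //.
  by rewrite v1 (le_trans (ltW q0) qv).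
- by rewrite lower_tail_ge0 // (ltW q0) (ltW q1).
- by move=> v /andP[qv v1]; apply: lower_tail_gt0; rewrite ?v1 ?(lt_trans q0 qv).
- by move=> /eqP; rewrite gt_eqF // lower_tail_gt0 ?q0.
move=> x y qx xy y1.
have x0 : 0 <= x by rewrite (le_trans (ltW q0) qx).
rewrite (lower_tailSS _ rm) [in leRHS](lower_tailSS _ rm) !lower_tailS.
have := lower_tail_cross rm x0 xy y1.
nra.
Qed.

(* [psi t m] is the objective with [m] observations still to be drawn and
   [t = n - ceil (q n)]; the truncated [m - t] realises the convention
   [B_{r,m} = 1] for [r < 0]. *)
Definition psi t m v := (1 - upper_tail (m - t) m v) * (v - q) + Num.max (q - v) 0.

Lemma psi_le_q t m v : v <= q -> psi t m v = upper_tail (m - t) m v * (q - v).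
Proof. by move=> vq; rewrite /psi max_l ?subr_ge0 //; ring. Qed.

Lemma psi_ge_q t m v : q <= v -> psi t m v = lower_tail (m - t) m v * (v - q).
Proof.
move=> qv; rewrite /psi max_r ?subr_le0 // lower_tailE ?addr0 //.
by rewrite leqW ?leq_subr.
Qed.

Lemma psiS_saturated t m : (m < t)%N -> psi t m.+1 = psi t m.
Proof.
move=> mt; rewrite /psi.
have -> : (m.+1 - t = 0)%N by apply/eqP; rewrite subn_eq0.
have -> : (m - t = 0)%N by apply/eqP; rewrite subn_eq0 ltnW.
by apply/funext => v; rewrite !upper_tail0.
Qed.

Lemma psiS_descent_le_q t m : descent_transfer (psi t m.+1) (psi t m) 0 q.
Proof.
have [tm|mt] := leqP t m; last by rewrite psiS_saturated // => x y.
apply: eq_descent_transfer (upper_tail_descent (leq_subr t m));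
  by move=> v; rewrite in_itv /= => /andP[_ vq]; rewrite psi_le_q // (subSn tm).
Qed.

Lemma psiS_descent_ge_q t m : descent_transfer (psi t m.+1) (psi t m) q 1.
Proof.
have [tm|mt] := leqP t m; last by rewrite psiS_saturated // => x y.
apply: eq_descent_transfer (lower_tail_descent (leq_subr t m));
  by move=> v; rewrite in_itv /= => /andP[qv _]; rewrite psi_ge_q // (subSn tm).
Qed.

Lemma continuous_psi t m : continuous (psi t m).
Proof.
have id_cont : continuous (fun v : R => v) by move=> v; exact: cvg_id.
have qB_cont : continuous (fun v => q - v).
  by move=> v; apply: continuousB; [exact: cst_continuous | exact: id_cont].
move=> v; apply: (@continuousD _ _ _ (fun v => (1 - upper_tail (m - t) m v) * (v - q))
                                    (fun v => Num.max (q - v) 0)).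
  apply: (@continuousM _ _ (fun v => 1 - upper_tail (m - t) m v) (fun v => v - q)).
    by apply: continuousB; [exact: cst_continuous | exact: continuous_upper_tail].
  by apply: continuousB; [exact: id_cont | exact: cst_continuous].
have : continuous ((fun v => q - v) \max cst 0).
  by apply: max_fun_continuous => //; exact: cst_continuous.
exact.
Qed.

End TailDescent.

Lemma qratio_in01 (R : realType) (cu co : R) : 0 < cu -> 0 < co -> 0 < qratio cu co < 1.
Proof.
move=> cu0 co0; rewrite /qratio divr_gt0 ?addr_gt0 //=.
by rewrite ltr_pdivrMr ?addr_gt0 // mul1r ltrDl.
Qed.

Lemma sigma_sub_succ ns K k : (k < K)%N ->
  (sigma ns K - sigma ns k = sigma ns K - sigma ns k.+1 + ns k.+1)%N.
Proof.
move=> kK.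
have -> : sigma ns K = (sigma ns k.+1 + \sum_(k.+2 <= l < K.+1) ns l)%N.
  by rewrite /sigma -big_cat_nat.
have -> : sigma ns k.+1 = (sigma ns k + ns k.+1)%N by rewrite /sigma big_nat_recr.
lia.
Qed.

Lemma PsiBSAA_psi (R : realType) (cu co : R) K ns k :
  0 < cu -> 0 < co -> (k <= K)%N ->
  let q := qratio cu co in let n := sigma ns K in
  PsiBSAA cu co K ns k = psi q (n - `|Num.ceil (q * n%:R)|) (n - sigma ns k).
Proof.
move=> cu0 co0 kK q n; have /andP[q0 q1] := qratio_in01 cu0 co0.
have c0 : 0 <= Num.ceil (q * n%:R).
  by rewrite ceil_ge0 (lt_le_trans (ltrN10 _)) // mulr_ge0 ?ler0n ?(ltW q0).
have cn : (`|Num.ceil (q * n%:R)| <= n)%N.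
  by rewrite -lez_nat gez0_abs // ceil_le_int ler_piMl ?ler0n ?ltW.
apply/funext => v; rewrite /PsiBSAA /psi -/q -/n -{1}(gez0_abs c0) Btail_subn.
by congr ((1 - upper_tail _ _ v) * _ + _); lia.
Qed.

Theorem lemma4 (R : realType) (cu co : R) (K : nat) (ns : nat -> nat) :
  0 < cu -> 0 < co -> (1 <= K)%N ->
  (forall k, (k < K)%N -> vminus cu co K ns k.+1 <= vminus cu co K ns k) /\
  (forall k, (k < K)%N -> vplus cu co K ns k.+1 <= vplus cu co K ns k).
Proof.
move=> cu0 co0 _; have q01 := qratio_in01 cu0 co0; have /andP[q0 q1] := q01.
split=> k kK; rewrite /vminus /vplus !PsiBSAA_psi ?(ltnW kK) // (sigma_sub_succ ns kK).
- apply: inf_argmax_le; [exact: ltW | exact: continuous_psi | exact: continuous_psi |].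
  by apply: descent_transfer_chain => m; apply: psiS_descent_le_q.
- apply: inf_argmax_le; [exact: ltW | exact: continuous_psi | exact: continuous_psi |].
  by apply: descent_transfer_chain => m; apply: psiS_descent_ge_q.
Qed.
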